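(* For an $E$-linear code $C$ of length $2n$: (1) $(C^{\perp_{S_L}})_{Res}=(C_{Res})^{\perp_S}=(C^{\perp_{S_L}})_{Tor}$; (2) $(C^{\perp_{S_R}})_{Res}=(C_{Tor})^{\perp_S}$ and $(C^{\perp_{S_R}})_{Tor}=\mathbb{F}_2^{2n}$; (3) $(C^{\perp_S})_{Res}=(C_{Tor})^{\perp_S}$ and $(C^{\perp_S})_{Tor}=(C_{Res})^{\perp_S}$.
   Context: $E=\langle \kappa,\tau \mid 2\kappa=2\tau=0,\ \kappa^2=\kappa,\ \tau^2=\tau,\ \kappa\tau=\kappa,\ \tau\kappa=\tau\rangle$ is the non-unital ring $\{0,\kappa,\tau,\zeta\}$, $\zeta=\kappa+\tau$, with $e\kappa=e\tau=e$, $e\zeta=0$ for all $e\in E$. Every $e\in E$ is uniquely $u\kappa+v\zeta$ ($u,v\in\mathbb{F}_2$); $\pi(u\kappa+v\zeta)=u$, componentwise. For $v\in\mathbb{F}_2^m$ and $e\in E$, $ev=(ev_1,\dots,ev_m)$ with $0\cdot e=0$, $1\cdot e=e$. An $E$-linear code of length $2n$ is a left $E$-submodule $C\subseteq E^{2n}$; $C_{Res}=\pi(C)$, $C_{Tor}=\{v\in\mathbb{F}_2^{2n}:\zeta v\in C\}$. Symplectic inner product (over $E$ or $\mathbb{F}_2$): $\langle (u|v),(u'|v')\rangle_s=\sum_i u_iv'_i+\sum_i v_iu'_i$, halves of length $n$. For binary $B$, $B^{\perp_S}=\{z\in\mathbb{F}_2^{2n}:\langle z,w\rangle_s=0\ \forall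 w\in B\}$. For $E$-linear $C$: $C^{\perp_{S_L}}=\{z\in E^{2n}:\langle z,w\rangle_s=0\ \forall w\in C\}$, $C^{\perp_{S_R}}=\{z\in E^{2n}:\langle w,z\rangle_s=0\ \forall w\in C\}$, $C^{\perp_S}=C^{\perp_{S_L}}\cap C^{\perp_{S_R}}$. *)

From HB Require Import structures.
From mathcomp Require Import all_boot all_algebra.
Set Implicit Arguments. Unset Strict Implicit. Unset Printing Implicit Defensive.
Import GRing.Theory.
Local Open Scope ring_scope.

(* The ring E = {0, kappa, tau, zeta}: an element u*kappa + v*zeta (u v : F_2)
   is represented by the pair (u, v).  Addition is componentwise. *)
Definition E := ('F_2 * 'F_2)%type.

Definition kappa : E := (1, 0).
Definition zeta  : E := (0, 1).
Definition tau   : E := (1, 1).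

Definition piE (e : E) : 'F_2 := e.1.

(* Multiplication in E: x * y = pi(y) x  (since e kappa = e tau = e, e zeta = 0). *)
Definition Emul (x y : E) : E := (x.1 * y.1, x.2 * y.1).

Definition bitE (b : 'F_2) (e : E) : E := (b * e.1, b * e.2).

Definition Eword m := {ffun 'I_m -> E}.
Definition Bword m := {ffun 'I_m -> 'F_2}.

Definition Escale m (e : E) (c : Eword m) : Eword m := [ffun i => Emul e (c i)].

Definition bscale m (e : E) (v : Bword m) : Eword m := [ffun i => bitE (v i) e].

Definition piV m (c : Eword m) : Bword m := [ffun i => piE (c i)].

Definition Elinear m (C : {set Eword m}) : Prop :=
  [/\ (0 : Eword m) \in C,
      (forall x y, x \in C -> y \in C -> x + y \in C) &
      (forall (e : E) x, x \in C -> Escale e x \in C)].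

Definition Res m (C : {set Eword m}) : {set Bword m} := [set piV c | c in C].
Definition Tor m (C : {set Eword m}) : {set Bword m} :=
  [set v | bscale zeta v \in C].

Definition sympF n (x y : Bword (n + n)) : 'F_2 :=
  \sum_(i < n) (x (lshift n i) * y (rshift n i) + x (rshift n i) * y (lshift n i)).

Definition sympE n (x y : Eword (n + n)) : E :=
  \sum_(i < n) (Emul (x (lshift n i)) (y (rshift n i))
                + Emul (x (rshift n i)) (y (lshift n i))).

Definition perpS n (B : {set Bword (n + n)}) : {set Bword (n + n)} :=
  [set z | [forall w in B, sympF z w == 0]].

Definition perpSL n (C : {set Eword (n + n)}) : {set Eword (n + n)} :=
  [set z | [forall w in C, sympE z w == 0]].
Definition perpSR n (C : {set Eword (n + n)}) : {set Eword (n + n)} :=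
  [set z | [forall w in C, sympE w z == 0]].
Definition perpSE n (C : {set Eword (n + n)}) : {set Eword (n + n)} :=
  perpSL C :&: perpSR C.

From mathcomp Require Import all_boot all_algebra.
Import GRing.Theory.
Local Open Scope ring_scope.
Set Implicit Arguments. Unset Strict Implicit.

(* Writing a word of E^2n as z = x kappa + y zeta with binary x = pi(z) and y,
   one has <z, w>_s = <x, pi(w)>_s kappa + <y, pi(w)>_s zeta, since e kappa = e
   and e zeta = 0.  Hence left orthogonality to C only constrains x and y
   against C_Res, while right orthogonality only constrains x, against the
   binary words pi(w) and y(w) for w in C, which for E-linear C are exactly the
   words of C_Tor.  Each orthogonal code is thus a "product" {x kappa + y zeta |
   x in A, y in B} of binary codes containing 0, whose residue and torsion codes
   are A and B; for the two-sided dual, C_Res <= C_Tor makes the intersection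
   of the two products again a product. *)

Lemma F2_addrr (a : 'F_2) : a + a = 0.
Proof. exact/addrr_pchar2/pchar_Fp. Qed.

Section Words.

Variable m : nat.
Implicit Types (x y v : Bword m) (z w : Eword m) (A B : {set Bword m}).

Definition sndV z : Bword m := [ffun i => (z i).2].
Definition mkE x y : Eword m := [ffun i => (x i, y i)].

Lemma piV_mkE x y : piV (mkE x y) = x.
Proof. by apply/ffunP => i; rewrite !ffunE. Qed.

Lemma sndV_mkE x y : sndV (mkE x y) = y.
Proof. by apply/ffunP => i; rewrite !ffunE. Qed.

Lemma mem_Tor (C : {set Eword m}) v : (v \in Tor C) = (mkE 0 v \in C).
Proof.
rewrite inE; congr (_ \in C).
by apply/ffunP => i; rewrite !ffunE /bitE /= mulr0 mulr1.
Qed.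

Definition prodE A B : {set Eword m} := [set z | (piV z \in A) && (sndV z \in B)].

Lemma mem_prodE A B z : (z \in prodE A B) = (piV z \in A) && (sndV z \in B).
Proof. by rewrite inE. Qed.

Lemma Res_prodE A B : 0 \in B -> Res (prodE A B) = A.
Proof.
move=> B0; apply/setP => x; apply/imsetP/idP => [[z] | Ax].
  by rewrite mem_prodE => /andP[Az _] ->.
by exists (mkE x 0); rewrite ?piV_mkE // mem_prodE piV_mkE sndV_mkE Ax.
Qed.

Lemma Tor_prodE A B : 0 \in A -> Tor (prodE A B) = B.
Proof. by move=> A0; apply/setP => y; rewrite mem_Tor mem_prodE piV_mkE sndV_mkE A0. Qed.

Lemma setI_prodE A B A' B' :
  prodE A B :&: prodE A' B' = prodE (A :&: A') (B :&: B').
Proof. by apply/setP => z; rewrite !inE andbACA. Qed.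

Section Linear.

Variable C : {set Eword m}.
Hypothesis linC : Elinear C.

Lemma Escale_zetaE w : Escale zeta w = mkE 0 (piV w).
Proof. by apply/ffunP => i; rewrite !ffunE /Emul /= mul0r mul1r. Qed.

Lemma Tor_linearE : Tor C = sndV @: C.
Proof.
have [_ addC scaleC] := linC.
apply/setP => y; apply/idP/imsetP => [| [w wC ->]].
  by rewrite mem_Tor => yC; exists (mkE 0 y); rewrite ?sndV_mkE.
rewrite mem_Tor; suff -> : mkE 0 (sndV w) = w + Escale kappa w by rewrite addC ?scaleC.
apply/ffunP => i; rewrite !ffunE /Emul /= mul1r mul0r.
by case: (w i) => a b; apply/eqP; rewrite -pair_eqE /= F2_addrr addr0 !eqxx.
Qed.

Lemma Res_sub_Tor : Res C \subset Tor C.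
Proof.
have [_ _ scaleC] := linC.
apply/subsetP => _ /imsetP[w wC ->]; rewrite mem_Tor -Escale_zetaE.
exact: scaleC.
Qed.

End Linear.

End Words.

Section Symplectic.

Variable n : nat.
Implicit Types (x y : Bword (n + n)) (z w : Eword (n + n)).
Implicit Types (A B : {set Bword (n + n)}) (C : {set Eword (n + n)}).

Lemma sympFC x y : sympF x y = sympF y x.
Proof.
apply: eq_bigr => i _.
by rewrite addrC (mulrC (x (lshift n i))) (mulrC (x (rshift n i))).
Qed.

Lemma sympF0 y : sympF 0 y = 0.
Proof. by rewrite /sympF big1 // => i _; rewrite !ffunE !mul0r addr0. Qed.

Lemma perpS0 B : 0 \in perpS B.
Proof. by rewrite inE; apply/forall_inP => w _; rewrite sympF0. Qed.

Lemma perpS_imset (T : finType) (f : T -> Bword (n + n)) (D : {pred T}) x :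
  (x \in perpS (f @: D)) = [forall w in D, sympF x (f w) == 0].
Proof.
rewrite inE; apply/forall_inP/forall_inP => orth_x w.
  by move=> wD; apply/orth_x/imset_f.
by case/imsetP => t tD ->; apply: orth_x.
Qed.

Lemma perpS_sub A B : A \subset B -> perpS B \subset perpS A.
Proof.
move=> /subsetP sAB; apply/subsetP => x; rewrite !inE.
by move=> /forall_inP orth_x; apply/forall_inP => w /sAB; apply: orth_x.
Qed.

Lemma sympE_split z w :
  sympE z w = (sympF (piV z) (piV w), sympF (sndV z) (piV w)).
Proof.
rewrite /sympE [LHS]surjective_pairing (big_morph fst (id1 := 0) (op1 := +%R)) //.
rewrite (big_morph snd (id1 := 0) (op1 := +%R)) //.
by congr (_, _); apply: eq_bigr => i _; rewrite !ffunE.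
Qed.

Lemma sympE_eq0 z w :
  (sympE z w == 0) = (sympF (piV z) (piV w) == 0) && (sympF (sndV z) (piV w) == 0).
Proof. by rewrite sympE_split -pair_eqE. Qed.

Lemma perpSL_prodE C : perpSL C = prodE (perpS (Res C)) (perpS (Res C)).
Proof.
apply/setP => z; rewrite inE mem_prodE /Res !perpS_imset.
apply/forall_inP/andP => [orth_z | [/forall_inP orth_x /forall_inP orth_y] w wC].
  by split; apply/forall_inP => w /orth_z; rewrite sympE_eq0 => /andP[].
by rewrite sympE_eq0 orth_x ?orth_y.
Qed.

Lemma perpSR_prodE C : Elinear C -> perpSR C = prodE (perpS (Tor C)) setT.
Proof.
move=> linC; have [_ _ scaleC] := linC.
apply/setP => z; rewrite inE mem_prodE in_setT andbT Tor_linearE // perpS_imset.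
apply/forall_inP/forall_inP => orth_z w wC.
  by rewrite sympFC; move: (orth_z w wC); rewrite sympE_eq0 => /andP[].
have /orth_z : Escale zeta w \in C by apply: scaleC.
rewrite Escale_zetaE sndV_mkE sympE_eq0 sympFC => ->.
by rewrite sympFC orth_z.
Qed.

Lemma perpSE_prodE C :
  Elinear C -> perpSE C = prodE (perpS (Tor C)) (perpS (Res C)).
Proof.
move=> linC; rewrite /perpSE perpSL_prodE perpSR_prodE // setI_prodE setIT.
by congr prodE; apply/setIidPr/perpS_sub/Res_sub_Tor.
Qed.

End Symplectic.

Theorem mainTheorem5 (n : nat) (C : {set Eword (n + n)}) :
  Elinear C ->
  [/\ Res (perpSL C) = perpS (Res C) /\ perpS (Res C) = Tor (perpSL C),
      Res (perpSR C) = perpS (Tor C) /\ Tor (perpSR C) = [set: Bword (n + n)] &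
      Res (perpSE C) = perpS (Tor C) /\ Tor (perpSE C) = perpS (Res C)].
Proof.
move=> linC; rewrite perpSE_prodE // perpSR_prodE // perpSL_prodE.
by rewrite !Res_prodE ?Tor_prodE ?perpS0 ?in_setT.
Qed.
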